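(* Let $X=(X_1,\dots,X_d)$ be a random vector with values in $\{0,1\}^d$ such that $\mathbb{P}(X=x)>0$ for every $x\in\{0,1\}^d$, and let $G:\{0,1\}^d\to\mathbb{R}$. Let $X^{(1)},\dots,X^{(n)}$ be i.i.d. copies of $X$. Define $\boldsymbol g(x):=(e_A(x_A)G(x))_{A\subseteq D}\in\mathbb{R}^{2^d}$, $\boldsymbol\mu:=\mathbb{E}[\boldsymbol g(X)]$, $\widehat{\boldsymbol\mu}_n:=\frac1n\sum_{i=1}^n\boldsymbol g(X^{(i)})$, $\Gamma_{A,B}:=\mathbb{E}[e_A(X_A)e_B(X_B)]$, $\widehat{\boldsymbol\beta}_n:=\Gamma^{-1}\widehat{\boldsymbol\mu}_n$, $\boldsymbol e(x):=(e_A(x_A))_{A\subseteq D}$ and $\widehat G_n(x):=\widehat{\boldsymbol\beta}_n^{\top}\boldsymbol e(x)$. Let $\|\boldsymbol g-\boldsymbol\mu\|_\infty:=\sup_{x\in\{0,1\}^d}\|\boldsymbol g(x)-\boldsymbol\mu\|_2$ and let $\lambda_{\min}(\Gamma)$ be the smallest eigenvalue of $\Gamma$. Then for every $x\in\{0,1\}^d$ and every $\varepsilon$ with $0\le\varepsilon\le\dfrac{\|\boldsymbol g-\boldsymbol\mu\|_\infty\|\boldsymbol e(x)\|_2}{\lambda_{\min}(\Gamma)}$, $$\mathbb{P}\left(|\widehat G_n(x)-G(x)|>\varepsilon\right)\le\exp\left(-\frac n8\left(\frac{\varepsilon\,\lambda_{\min}(\Gamma)}{\|\boldsymbol g-\boldsymbol\mu\|_\infty\|\boldsymbol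 e(x)\|_2}\right)^2+\frac14\right).$$
   Context: $D=\{1,\dots,d\}$; for $A\subseteq D$, $x_A:=(x_i)_{i\in A}$, $\mathbf{P}_A(x_A):=\mathbb{P}(X_A=x_A)$, and $e_A(x_A):=\dfrac{(-1)^{\sum_{j\in A}x_j}}{\mathbf{P}_A(x_A)}$ with $e_\emptyset\equiv1$. The matrix $\Gamma=(\Gamma_{A,B})_{A,B\subseteq D}$ is symmetric positive definite. *)

From HB Require Import structures.
From mathcomp Require Import all_boot all_order all_algebra.
From mathcomp Require Import reals.
From mathcomp.analysis Require Import sequences exp.
Set Implicit Arguments. Unset Strict Implicit. Unset Printing Implicit Defensive.
Import Order.TTheory GRing.Theory Num.Theory.
Local Open Scope ring_scope.

Section Defs.
Variables (R : realType) (d : nat).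

(* points of {0,1}^d : x_i = true stands for 1 *)
Definition state := {ffun 'I_d -> bool}.
(* index set for the vectors (e_A)_{A subset D} : the subsets of D *)
Definition NS := #|{set 'I_d}|.
Definition subset_of (k : 'I_NS) : {set 'I_d} := enum_val k.

Definition is_law (p : state -> R) := (forall x, 0 < p x) /\ \sum_x p x = 1.

Definition PA (p : state -> R) (A : {set 'I_d}) (x : state) : R :=
  \sum_(y : state | [forall i in A, y i == x i]) p y.

Definition eA (p : state -> R) (A : {set 'I_d}) (x : state) : R :=
  (-1) ^+ #|[set j in A | x j]| / PA p A x.

Definition evec (p : state -> R) (x : state) : 'cV[R]_NS :=
  \col_k eA p (subset_of k) x.

Definition gvec (p : state -> R) (G : state -> R) (x : state) : 'cV[R]_NS :=
  \col_k (eA p (subset_of k) x * G x).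

Definition muvec p G : 'cV[R]_NS := \sum_x p x *: gvec p G x.

Definition Gamma p : 'M[R]_NS :=
  \matrix_(k, l) \sum_x p x * (eA p (subset_of k) x * eA p (subset_of l) x).

Definition sample n := {ffun 'I_n -> state}.

Definition muhat p G n (s : sample n) : 'cV[R]_NS :=
  (n%:R)^-1 *: \sum_i gvec p G (s i).

Definition betahat p G n (s : sample n) : 'cV[R]_NS :=
  invmx (Gamma p) *m muhat p G s.

Definition Ghat p G n (s : sample n) (x : state) : R :=
  ((betahat p G s)^T *m evec p x) 0 0.

Definition norm2 (v : 'cV[R]_NS) : R := Num.sqrt (\sum_k v k 0 ^+ 2).

Definition gsup p G : R := \big[Num.max/0]_x norm2 (gvec p G x - muvec p G).

Definition is_lambda_min (M : 'M[R]_NS) (lam : R) :=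
  eigenvalue M lam /\ forall b, eigenvalue M b -> lam <= b.

Definition Pn (p : state -> R) n (E : pred (sample n)) : R :=
  \sum_(s : sample n | E s) \prod_i p (s i).

End Defs.

(* Since Gamma is invertible, G is a combination of the e_A and Gamma^-1 mu recovers its
   coefficients, so Ghat_n(x) - G(x) is the empirical mean of the centred i.i.d. variables
   Y(z) = e(x)^T Gamma^-1 (g(z) - mu); Cauchy-Schwarz and the spectral theorem bound them by
   c = ||g - mu||_oo ||e(x)||_2 / lambda_min. For such a mean, with u = n (eps / c)^2, the
   tail bound is trivial when u <= 2, follows from Chebyshev's inequality when u <= 14, and
   from a Chernoff bound, based on exp y <= 1 + y + y^2 / (1 - t) for |y| <= t < 1, beyond. *)

Set Warnings "-notation-overridden,-ambiguous-paths".
From HB Require Import structures.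
From mathcomp Require Import all_boot all_order all_algebra.
From mathcomp Require Import reals.
From mathcomp.analysis Require Import sequences exp.
From mathcomp Require Import complex spectral sesquilinear.
From mathcomp Require Import lra ring.
Set Implicit Arguments. Unset Strict Implicit. Unset Printing Implicit Defensive.
Import Order.TTheory GRing.Theory Num.Theory.
Local Open Scope ring_scope.

Section RealBounds.
Variable R : realType.
Implicit Types y t u : R.

Lemma expR_le_inv1B y : y < 1 -> expR y <= (1 - y)^-1.
Proof.
move=> y1; rewrite -[expR y]invrK lef_pV2 ?posrE ?invr_gt0 ?expR_gt0 ?subr_gt0 //.
by rewrite -expRN; exact: expR_ge1Dx.
Qed.

Lemma expR_le_quadratic y t :
  `|y| <= t -> t < 1 -> expR y <= 1 + y + y ^+ 2 / (1 - t).
Proof.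
rewrite ler_norml => /andP[ty yt] t1.
have y1 : y < 1 by lra.
apply: (le_trans (expR_le_inv1B y1)).
have -> : (1 - y)^-1 = 1 + y + y ^+ 2 / (1 - y) by field; lra.
by rewrite lerD2l ler_wpM2l ?sqr_ge0 // lef_pV2 ?posrE; lra.
Qed.

Definition tail_bound u := expR (- u / 8 + 4^-1).

Lemma tail_bound_ge1 u : u <= 2 -> 1 <= tail_bound u.
Proof. by move=> u2; apply: le_trans (expR_ge1Dx _); lra. Qed.

(* Writing [u = 24 t + 2], the claim is [exp (3 t) <= u], and indeed
   [exp (3 t) <= (1 - t)^-3 <= 24 t + 2] on [[0, 1/2]]. *)
Lemma chebyshev_le_tail_bound u : 2 <= u -> u <= 14 -> u^-1 <= tail_bound u.
Proof.
move=> u2 u14; set t := (u / 8 - 4^-1) / 3.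
have t0 : 0 <= t by rewrite /t; lra.
have t1 : t <= 2^-1 by rewrite /t; lra.
have exp_t : expR (3 * t) <= ((1 - t)^-1) ^+ 3.
  have t_lt1 : t < 1 by lra.
  rewrite mulrC expRM_natr lerXn2r ?nnegrE ?expR_ge0 ?invr_ge0 ?subr_ge0 //;
    [lra | exact: expR_le_inv1B].
have cube_gt0 : 0 < (1 - t) ^+ 3 by rewrite exprn_gt0 // subr_gt0; lra.
have cube : 1 <= u * (1 - t) ^+ 3.
  have -> : u = 24 * t + 2 by rewrite /t; field.
  have -> : (1 - t) ^+ 3 = (1 - t) * (1 - t) * (1 - t) by ring.
  have [t_le|t_gt] := lerP t 4^-1.
    have t2_ge0 : 0 <= t * t * (3 - t) by rewrite !mulr_ge0 //; lra.
    have bernoulli : 1 - 3 * t <= (1 - t) * (1 - t) * (1 - t) by nra.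
    have := ler_wpM2l (_ : 0 <= 24 * t + 2) bernoulli; nra.
  have half_cube : 8^-1 <= (1 - t) * (1 - t) * (1 - t).
    have -> : 8^-1 = 2^-1 * 2^-1 * 2^-1 :> R by field.
    by rewrite !ler_pM ?mulr_ge0 //; lra.
  have := ler_wpM2l (_ : 0 <= 24 * t + 2) half_cube; nra.
rewrite /tail_bound (_ : - u / 8 + 4^-1 = - (3 * t)); last by rewrite /t; field.
rewrite expRN lef_pV2 ?posrE ?expR_gt0 //; last by lra.
by apply: (le_trans exp_t); rewrite exprVn -[X in X <= _]mul1r ler_pdivrMr.
Qed.

Lemma chernoff_le_tail_bound u : 14 <= u -> 2 * expR (- u / 6) <= tail_bound u.
Proof.
move=> u14; set v := u / 24 + 4^-1.
rewrite /tail_bound (_ : - u / 8 + 4^-1 = - u / 6 + v); last by rewrite /v; field.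
rewrite expRD mulrC ler_pM2l ?expR_gt0 //.
rewrite (_ : v = v / 2 * 2%:R); last by field.
rewrite expRM_natr; apply: (@le_trans _ _ ((1 + v / 2) ^+ 2)).
  by rewrite expr2; rewrite /v; nra.
by rewrite lerXn2r ?nnegrE ?expR_ge0 ?expR_ge1Dx //; rewrite /v; lra.
Qed.

End RealBounds.

Section CauchySchwarz.
Variable R : rcfType.

Lemma CauchySchwarz_sum m (a b : 'I_m -> R) :
  `|\sum_k a k * b k| <= Num.sqrt (\sum_k a k ^+ 2) * Num.sqrt (\sum_k b k ^+ 2).
Proof.
set A := \sum_k a k ^+ 2; set B := \sum_k b k ^+ 2; set C := \sum_k a k * b k.
have A0 : 0 <= A by apply: sumr_ge0 => k _; exact: sqr_ge0.
have B0 : 0 <= B by apply: sumr_ge0 => k _; exact: sqr_ge0.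
rewrite -sqrtrM // -sqrtr_sqr ler_sqrt ?mulr_ge0 //.
have expand : \sum_k (A * b k - C * a k) ^+ 2 = A * (A * B - C ^+ 2).
  rewrite (eq_bigr (fun k => A ^+ 2 * b k ^+ 2 - 2 * A * C * (a k * b k) + C ^+ 2 * a k ^+ 2));
    last by move=> k _; ring.
  by rewrite !big_split /= sumrN -!mulr_sumr -/A -/B -/C; ring.
have : 0 <= A * (A * B - C ^+ 2).
  by rewrite -expand; apply: sumr_ge0 => k _; exact: sqr_ge0.
have [A_eq0 _|A_neq0] := eqVneq A 0.
  suff -> : C = 0 by rewrite expr0n mulr_ge0.
  rewrite /C big1 // => k _; suff -> : a k = 0 by rewrite mul0r.
  apply/eqP; rewrite -sqrf_eq0 eq_le sqr_ge0 andbT -A_eq0 /A (bigD1 k) //= lerDl.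
  by apply: sumr_ge0 => l _; exact: sqr_ge0.
by rewrite pmulr_rge0 ?subr_ge0 // lt0r A_neq0.
Qed.
End CauchySchwarz.

Lemma eigenvalue_spectral_diag (C : numClosedFieldType) n (A : 'M[C]_n) j :
  A \is normalmx -> eigenvalue A (spectral_diag A 0 j).
Proof.
move=> /orthomx_spectralP A_eq; set P := spectralmx A in A_eq.
apply/eigenvalueP; exists (delta_mx 0 j *m P).
  rewrite [in LHS]A_eq !mulmxA mulmxK ?spectral_unit //.
  by rewrite -!rowE row_diag_mx -scalemxAl rowE.
by rewrite mulmx_free_eq0 ?row_free_unit ?spectral_unit // -mxrank_eq0 mxrank_delta.
Qed.

Section SpectralBound.
Variable R : rcfType.
Local Open Scope sesquilinear_scope.
Local Notation C := R[i].
Local Notation toC := (real_complex R).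

Definition sqnormc n (y : 'cV[C]_n) : C := \sum_k `|y k 0| ^+ 2.

Lemma sqnormc_unitary n (P : 'M[C]_n) (y : 'cV[C]_n) :
  P \is unitarymx -> sqnormc (P ^t* *m y) = sqnormc y.
Proof.
move=> /unitarymxP P_unitary.
suff sqnormcE (z : 'cV[C]_n) : sqnormc z = (z ^t* *m z) 0 0.
  by rewrite !sqnormcE trmx_mul map_mxM trmxCK mulmxA -(mulmxA _ P) P_unitary mulmx1.
by rewrite /sqnormc mxE; apply: eq_bigr => k _; rewrite !mxE normCKC.
Qed.

Lemma sqnormc_real n (v : 'cV[R]_n) : sqnormc (map_mx toC v) = toC (\sum_k v k 0 ^+ 2).
Proof.
rewrite /sqnormc rmorph_sum; apply: eq_bigr => k _.
by rewrite mxE normCK conj_Creal ?rmorphXn //; apply/complex_realP; eexists.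
Qed.

Lemma map_realsym_hermsym n (A : 'M[R]_n) : A^T = A -> map_mx toC A \is hermsymmx.
Proof.
move=> A_sym; apply: realsym_hermsym.
  apply/is_hermitianmxP; rewrite expr0 scale1r; apply/matrixP => i k.
  by rewrite !mxE -[in LHS]A_sym mxE.
by apply/mxOverP => i j; rewrite mxE; apply/complex_realP; eexists.
Qed.

Lemma realsym_spectral_diag n (A : 'M[R]_n) j : A^T = A ->
  exists2 b, spectral_diag (map_mx toC A) 0 j = toC b & eigenvalue A b.
Proof.
move=> A_sym; have A_herm := map_realsym_hermsym A_sym.
have /mxOverP/(_ 0 j)/RRe_real X_real := hermitian_spectral_diag_real A_herm.
exists (complex.Re (spectral_diag (map_mx toC A) 0 j)); first by rewrite X_real.
rewrite -(eigenvalue_map toC) /= X_real.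
exact/eigenvalue_spectral_diag/hermitian_normalmx.
Qed.

Lemma sqr_norm_mulmx_ge n (A : 'M[R]_n) (lam : R) :
  A^T = A -> 0 <= lam -> (forall b, eigenvalue A b -> lam <= b) ->
  forall w : 'cV[R]_n, lam ^+ 2 * \sum_k w k 0 ^+ 2 <= \sum_k (A *m w) k 0 ^+ 2.
Proof.
move=> A_sym lam_ge0 lam_min w.
have A_normal := hermitian_normalmx (map_realsym_hermsym A_sym).
set P := spectralmx (map_mx toC A); set X := spectral_diag (map_mx toC A).
have P_unitary : P \is unitarymx by exact: spectral_unitarymx.
have AE : map_mx toC A = P ^t* *m diag_mx X *m P.
  by rewrite -invmx_unitary //; exact/orthomx_spectralP.
have X_ge j : toC lam ^+ 2 <= `|X 0 j| ^+ 2.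
  have [b -> /lam_min lam_b] := realsym_spectral_diag j A_sym.
  by rewrite -add_Re2_Im2 /= -rmorphXn lecR expr0n addr0 lerXn2r ?nnegrE //; lra.
pose z := P *m map_mx toC w.
have wE : map_mx toC w = P ^t* *m z.
  by rewrite /z mulmxA -invmx_unitary // mulVmx ?unitarymx_unit // mul1mx.
have AwE : map_mx toC (A *m w) = P ^t* *m (diag_mx X *m z).
  by rewrite map_mxM AE -!mulmxA.
rewrite -lecR.
have -> : toC (lam ^+ 2 * \sum_k w k 0 ^+ 2) = toC lam ^+ 2 * sqnormc (map_mx toC w).
  by rewrite sqnormc_real rmorphM rmorphXn.
rewrite -sqnormc_real AwE wE !sqnormc_unitary //.
rewrite /sqnormc mulr_sumr; apply: ler_sum => k _.
by rewrite mul_diag_mx !mxE normrM exprMn ler_wpM2r ?exprn_ge0.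
Qed.
End SpectralBound.

Lemma lt_norm_mean (R : realFieldType) n (eps x : R) : (0 < n)%N ->
  (eps < `|n%:R^-1 * x|) = (n%:R * eps < `|x|).
Proof.
move=> n_gt0; rewrite normrM ger0_norm ?invr_ge0 ?ler0n // mulrC.
by rewrite ltr_pdivlMr ?ltr0n // mulrC.
Qed.

Section IidSums.
Variables (R : realType) (T : finType) (p : T -> R).
Hypotheses (p_gt0 : forall z, 0 < p z) (p_sum1 : \sum_z p z = 1).

Definition expect_iid n (F : {ffun 'I_n -> T} -> R) : R :=
  \sum_(w : {ffun 'I_n -> T}) \prod_i p (w i) * F w.

Lemma prod_p_ge0 n (w : {ffun 'I_n -> T}) : 0 <= \prod_i p (w i).
Proof. by apply: prodr_ge0 => i _; exact: ltW. Qed.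

Lemma eq_expect_iid n (F F' : {ffun 'I_n -> T} -> R) :
  F =1 F' -> expect_iid F = expect_iid F'.
Proof. by move=> FF; apply: eq_bigr => w _; rewrite FF. Qed.

Lemma expect_iidD n (F1 F2 : {ffun 'I_n -> T} -> R) :
  expect_iid (fun w => F1 w + F2 w) = expect_iid F1 + expect_iid F2.
Proof. by rewrite -big_split; apply: eq_bigr => w _; rewrite mulrDr. Qed.

Lemma expect_iidMr n (F : {ffun 'I_n -> T} -> R) (a : R) :
  expect_iid (fun w => F w * a) = expect_iid F * a.
Proof. by rewrite mulr_suml; apply: eq_bigr => w _; rewrite mulrA. Qed.

Lemma expect_iid_sum n (I : finType) (F : I -> {ffun 'I_n -> T} -> R) :
  expect_iid (fun w => \sum_k F k w) = \sum_k expect_iid (F k).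
Proof. by rewrite exchange_big; apply: eq_bigr => w _; rewrite mulr_sumr. Qed.

Lemma expect_iid_prod n (h : 'I_n -> T -> R) :
  expect_iid (fun w => \prod_i h i (w i)) = \prod_i \sum_z p z * h i z.
Proof.
rewrite bigA_distr_bigA /=; apply: eq_bigr => w _; by rewrite big_split.
Qed.

Lemma prob_iid_le_expect n (E : pred {ffun 'I_n -> T}) F :
  (forall w, 0 <= F w) -> (forall w, E w -> 1 <= F w) ->
  \sum_(w | E w) \prod_i p (w i) <= expect_iid F.
Proof.
move=> F_ge0 F_ge1; rewrite /expect_iid [X in _ <= X](bigID E) /=.
apply: ler_wpDr; first by apply: sumr_ge0 => w _; rewrite mulr_ge0 ?prod_p_ge0.
by apply: ler_sum => w Ew; rewrite ler_peMr ?prod_p_ge0 ?F_ge1.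
Qed.

Lemma expect_iid1 n : expect_iid (fun _ : {ffun 'I_n -> T} => 1) = 1.
Proof.
rewrite /expect_iid; under eq_bigr do rewrite mulr1.
by rewrite -(bigA_distr_bigA (fun _ z => p z)) /= big1.
Qed.

Lemma prob_iid_le1 n (E : pred {ffun 'I_n -> T}) :
  \sum_(w | E w) \prod_i p (w i) <= 1.
Proof.
rewrite -[X in _ <= X](expect_iid1 n); exact: prob_iid_le_expect.
Qed.

Lemma expect_iid_coordM n (Y : T -> R) (i j : 'I_n) :
  expect_iid (fun w => Y (w i) * Y (w j)) =
  if i == j then \sum_z p z * Y z ^+ 2 else (\sum_z p z * Y z) ^+ 2.
Proof.
pose h k z := (if k == i then Y z else 1) * (if k == j then Y z else 1).
have factor_eq1 k : k != i -> k != j -> \sum_z p z * h k z = 1.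
  move=> /negPf ki /negPf kj; rewrite -[RHS]p_sum1.
  by apply: eq_bigr => z _; rewrite /h ki kj /= !mulr1.
rewrite (@eq_expect_iid _ _ (fun w => \prod_k h k (w k))); last first.
  by move=> w; rewrite big_split /= -!big_mkcond !big_pred1_eq.
rewrite expect_iid_prod (bigD1 i) //=.
case: (eqVneq i j) => [ij|ij]; first subst j.
  rewrite [X in _ * X]big1 ?mulr1; last by move=> k ki; apply: factor_eq1.
  by apply: eq_bigr => z _; rewrite /h eqxx expr2.
rewrite (bigD1 j) 1?eq_sym //= [X in _ * (_ * X)]big1 ?mulr1; last first.
  by move=> k /andP[ki kj]; exact: factor_eq1.
rewrite expr2 /h !eqxx (negPf ij) eq_sym (negPf ij).
by congr (_ * _); apply: eq_bigr => z _; rewrite ?mulr1 ?mul1r.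
Qed.

Lemma expect_iid_expR_sum n (Y : T -> R) (s : R) :
  expect_iid (fun w : {ffun 'I_n -> T} => expR (s * \sum_i Y (w i))) =
  (\sum_z p z * expR (s * Y z)) ^+ n.
Proof.
rewrite (@eq_expect_iid _ _ (fun w => \prod_i expR (s * Y (w i)))); last first.
  by move=> w; rewrite mulr_sumr expR_sum.
by rewrite (expect_iid_prod (fun _ z => expR (s * Y z))) prodr_const card_ord.
Qed.

Section Centered.
Variables (Y : T -> R) (c : R).
Hypotheses (Y_mean0 : \sum_z p z * Y z = 0) (Y_le : forall z, `|Y z| <= c).

Lemma expect_iid_sum_sq n :
  expect_iid (fun w : {ffun 'I_n -> T} => (\sum_i Y (w i)) ^+ 2) =
  n%:R * \sum_z p z * Y z ^+ 2.
Proof.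
rewrite (@eq_expect_iid _ _ (fun w => \sum_i \sum_j Y (w i) * Y (w j))); last first.
  by move=> w; rewrite expr2 mulr_suml; apply: eq_bigr => i _; rewrite mulr_sumr.
rewrite expect_iid_sum mulr_natl -[X in _ *+ X]card_ord -sumr_const.
apply: eq_bigr => i _; rewrite expect_iid_sum (bigD1 i) //= expect_iid_coordM eqxx.
rewrite [X in _ + X]big1 ?addr0 // => j ji.
by rewrite expect_iid_coordM eq_sym (negPf ji) Y_mean0 expr0n.
Qed.

Lemma mgf_le (s : R) : 0 <= s -> s * c < 1 ->
  \sum_z p z * expR (s * Y z) <= expR (s ^+ 2 * c ^+ 2 / (1 - s * c)).
Proof.
move=> s_ge0 sc1; set K := s ^+ 2 * c ^+ 2 / (1 - s * c).
apply: le_trans (expR_ge1Dx K).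
apply: (@le_trans _ _ (\sum_z (p z + s * (p z * Y z) + p z * K))); last first.
  by rewrite !big_split /= -mulr_sumr -mulr_suml Y_mean0 p_sum1 mulr0 addr0 mul1r.
apply: ler_sum => z _; have pz := p_gt0 z.
have sY_le : `|s * Y z| <= s * c by rewrite normrM ger0_norm // ler_wpM2l.
have sY2_le : (s * Y z) ^+ 2 / (1 - s * c) <= K.
  rewrite /K -exprMn ler_pM2r ?invr_gt0 ?subr_gt0 //.
  by rewrite -real_normK ?num_real // lerXn2r ?nnegrE // (le_trans _ sY_le).
apply: (le_trans (ler_wpM2l (ltW pz) (expR_le_quadratic sY_le sc1))).
nra.
Qed.

Lemma expect_iid_expR_sum_le n (s : R) : 0 <= s -> s * c < 1 ->
  expect_iid (fun w : {ffun 'I_n -> T} => expR (s * \sum_i Y (w i)))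
  <= expR (n%:R * (s ^+ 2 * c ^+ 2 / (1 - s * c))).
Proof.
move=> s_ge0 sc1; rewrite expect_iid_expR_sum expRM_natl lerXn2r ?nnegrE ?expR_ge0 ?mgf_le //.
by apply: sumr_ge0 => z _; rewrite mulr_ge0 ?expR_ge0 ?ltW.
Qed.

Lemma chebyshev_iid n (eps : R) : (0 < n)%N -> 0 < eps ->
  \sum_(w : {ffun 'I_n -> T} | eps < `|n%:R^-1 * \sum_i Y (w i)|) \prod_i p (w i)
  <= c ^+ 2 / (n%:R * eps ^+ 2).
Proof.
move=> n_gt0 eps_gt0; have n_gt0' : 0 < n%:R :> R by rewrite ltr0n.
have dev2_gt0 : 0 < (n%:R * eps) ^+ 2 by rewrite exprn_gt0 ?mulr_gt0.
pose F (w : {ffun 'I_n -> T}) := (\sum_i Y (w i)) ^+ 2 / (n%:R * eps) ^+ 2.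
apply: (le_trans (prob_iid_le_expect (F := F) _ _)).
- by move=> w; rewrite /F divr_ge0 ?sqr_ge0 ?ltW.
- move=> w; rewrite /F lt_norm_mean // ler_pdivlMr // mul1r => /ltW dev.
  rewrite -[X in _ <= X]real_normK ?num_real // lerXn2r ?nnegrE //.
  by rewrite mulr_ge0 ?ler0n ?(ltW eps_gt0).
rewrite expect_iidMr expect_iid_sum_sq.
have var_le : \sum_z p z * Y z ^+ 2 <= c ^+ 2.
  rewrite -[c ^+ 2]mul1r -p_sum1 mulr_suml; apply: ler_sum => z _.
  have c_ge0 : 0 <= c := le_trans (normr_ge0 _) (Y_le z).
  apply: ler_wpM2l; first exact: ltW.
  by rewrite -[X in X <= _]real_normK ?num_real // lerXn2r ?nnegrE.
rewrite (_ : c ^+ 2 / (n%:R * eps ^+ 2) = n%:R * c ^+ 2 / (n%:R * eps) ^+ 2); last first.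
  by field; rewrite !gt_eqF.
by rewrite ler_pM2r ?invr_gt0 // ler_wpM2l.
Qed.
End Centered.

Lemma chernoff_iid n (Y : T -> R) (c eps : R) :
  \sum_z p z * Y z = 0 -> (forall z, `|Y z| <= c) -> (0 < n)%N -> 0 < eps -> eps <= c ->
  \sum_(w : {ffun 'I_n -> T} | eps < `|n%:R^-1 * \sum_i Y (w i)|) \prod_i p (w i)
  <= 2 * expR (- (n%:R * (eps / c) ^+ 2) / 6).
Proof.
move=> Y_mean0 Y_le n_gt0 eps_gt0 eps_le_c; have c_gt0 := lt_le_trans eps_gt0 eps_le_c.
(* With [s = r / (4 c)] we get [s c = r / 4], so the exponent
   [n s^2 c^2 / (1 - s c) - s n eps] is at most [n r^2 / 12 - n r^2 / 4]. *)
set r := eps / c; have r_gt0 : 0 < r by rewrite divr_gt0.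
have r_le1 : r <= 1 by rewrite ler_pdivrMr // mul1r.
set s := r / (4 * c).
have sc : s * c = r / 4 by rewrite /s; field; exact: lt0r_neq0.
have s_ge0 : 0 <= s by apply/ltW/divr_gt0 => //; lra.
have sc1 : s * c < 1 by rewrite sc; lra.
set e := expR (- (s * (n%:R * eps))).
pose F (w : {ffun 'I_n -> T}) :=
  expR (s * \sum_i Y (w i)) * e + expR (s * \sum_i - Y (w i)) * e.
apply: (le_trans (prob_iid_le_expect (F := F) _ _)).
- by move=> w; rewrite addr_ge0 ?mulr_ge0 ?expR_ge0.
- move=> w; rewrite lt_norm_mean // /F /e -!expRD ltr_normr sumrN => /orP[] /ltW big_dev.
    rewrite ler_wpDr ?expR_ge0 // -[X in X <= _]expR0 ler_expR subr_ge0.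
    by apply: ler_wpM2l.
  rewrite ler_wpDl ?expR_ge0 // -[X in X <= _]expR0 ler_expR subr_ge0.
  by apply: ler_wpM2l.
have mY_mean0 : \sum_z p z * - Y z = 0.
  by under eq_bigr do rewrite mulrN; rewrite sumrN Y_mean0 oppr0.
have mY_le z : `|- Y z| <= c by rewrite normrN.
rewrite expect_iidD !expect_iidMr -mulrDl.
apply: le_trans (ler_wpM2r (expR_ge0 _) (lerD (expect_iid_expR_sum_le Y_mean0 Y_le n s_ge0 sc1)
  (expect_iid_expR_sum_le mY_mean0 mY_le n s_ge0 sc1))) _.
set K := s ^+ 2 * c ^+ 2 / (1 - s * c).
rewrite -mulr2n -[_ *+ 2]mulr_natl -mulrA /e -expRD ler_pM2l // ler_expR.
have K_le : K <= r ^+ 2 / 12.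
  rewrite /K -exprMn sc ler_pdivrMr; last by lra.
  have -> : (r / 4) ^+ 2 = r ^+ 2 / 16 by field.
  nra.
have -> : s * (n%:R * eps) = n%:R * r ^+ 2 / 4 by rewrite /s /r; field; exact: lt0r_neq0.
have : n%:R * K <= n%:R * (r ^+ 2 / 12) by rewrite ler_wpM2l ?ler0n.
lra.
Qed.

Lemma concentration_iid n (Y : T -> R) (c eps : R) :
  \sum_z p z * Y z = 0 -> (forall z, `|Y z| <= c) -> (0 < n)%N -> 0 <= eps -> eps <= c ->
  \sum_(w : {ffun 'I_n -> T} | eps < `|n%:R^-1 * \sum_i Y (w i)|) \prod_i p (w i)
  <= tail_bound (n%:R * (eps / c) ^+ 2).
Proof.
move=> Y_mean0 Y_le n_gt0 eps_ge0 eps_le_c; set u := n%:R * (eps / c) ^+ 2.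
have [u_le2|u_gt2] := lerP u 2.
  exact: le_trans (prob_iid_le1 _) (tail_bound_ge1 u_le2).
have eps_gt0 : 0 < eps.
  rewrite lt0r eps_ge0 andbT; apply: contraTneq u_gt2 => eps0.
  by rewrite /u eps0 mul0r expr0n mulr0 -leNgt ler0n.
have c_gt0 := lt_le_trans eps_gt0 eps_le_c.
have [u_le14|u_gt14] := lerP u 14.
  apply: le_trans (chebyshev_le_tail_bound (ltW u_gt2) u_le14).
  rewrite (_ : u^-1 = c ^+ 2 / (n%:R * eps ^+ 2)); last first.
    by rewrite /u; field; rewrite !lt0r_neq0 ?ltr0n.
  exact: chebyshev_iid.
apply: le_trans (chernoff_le_tail_bound (ltW u_gt14)).
exact: chernoff_iid.
Qed.
End IidSums.

Lemma unitmx_eigenvalue_gt0 (F : realFieldType) n (M : 'M[F]_n) (lam : F) :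
  (forall b, eigenvalue M b -> lam <= b) -> 0 < lam -> M \in unitmx.
Proof.
move=> lam_min; apply: contraTT => M_nunit; rewrite -leNgt; apply: lam_min.
by rewrite /eigenvalue /eigenspace raddf0 subr0 kermx_eq0 row_free_unit.
Qed.

Lemma mxform_sumZ (R : comPzRingType) m (M : 'M[R]_m) (e : 'cV[R]_m)
    (I : finType) (a : I -> R) (v : I -> 'cV[R]_m) :
  ((M *m \sum_i a i *: v i)^T *m e) 0 0 = \sum_i a i * ((M *m v i)^T *m e) 0 0.
Proof.
rewrite mulmx_sumr linear_sum /= mulmx_suml summxE; apply: eq_bigr => i _.
by rewrite -scalemxAr linearZ /= -scalemxAl mxE.
Qed.

Lemma mxformB (R : comPzRingType) m (M : 'M[R]_m) (e u v : 'cV[R]_m) :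
  ((M *m (u - v))^T *m e) 0 0 = ((M *m u)^T *m e) 0 0 - ((M *m v)^T *m e) 0 0.
Proof. by rewrite mulmxBr linearB /= mulmxBl !mxE. Qed.

Section Model.
Variables (R : realType) (d : nat) (p G : state d -> R).

Lemma card_state : #|state d| = NS d.
Proof.
rewrite /NS -[#|{set 'I_d}|]cardsT -powersetT card_powerset cardsT.
by rewrite card_ffun card_bool !card_ord.
Qed.

Lemma Gamma_sym : (Gamma p)^T = Gamma p.
Proof.
apply/matrixP => k l; rewrite !mxE; apply: eq_bigr => x _.
by rewrite (mulrC (eA p (subset_of l) x)).
Qed.

Lemma eA_span : Gamma p \in unitmx ->
  exists beta : 'cV[R]_(NS d), forall z, G z = \sum_k beta k 0 * eA p (subset_of k) z.
Proof.
move=> Gamma_unit; pose N := #|state d|.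
pose E : 'M[R]_(NS d, N) := \matrix_(k, j) eA p (subset_of k) (enum_val j).
have Gamma_factor : Gamma p = E *m diag_mx (\row_j p (enum_val j)) *m E^T.
  apply/matrixP => k l; rewrite !mxE.
  under [RHS]eq_bigr do rewrite mul_mx_diag !mxE.
  rewrite (reindex (@enum_rank _)) /=; last by apply: onW_bij; exact: enum_rank_bij.
  by apply: eq_bigr => x _; rewrite enum_rankK; ring.
have E_rank : \rank E = NS d.
  apply/eqP; rewrite eqn_leq rank_leq_row -{1}(mxrank_unit Gamma_unit) Gamma_factor.
  exact: leq_trans (mxrankM_maxl _ _) (mxrankM_maxl _ _).
have E_full : row_full E by rewrite /row_full E_rank /N card_state.
have /submxP[beta G_eq] := submx_full (\row_j G (enum_val j)) E_full.
exists beta^T => z; have /matrixP/(_ 0 (enum_rank z)) := G_eq.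
rewrite !mxE enum_rankK => ->.
by apply: eq_bigr => k _; rewrite !mxE enum_rankK.
Qed.

Lemma G_expansion : Gamma p \in unitmx ->
  forall z, G z = ((invmx (Gamma p) *m muvec p G)^T *m evec p z) 0 0.
Proof.
move=> Gamma_unit z; have [beta G_eq] := eA_span Gamma_unit.
have -> : muvec p G = Gamma p *m beta.
  apply/matrixP => k i; rewrite !mxE summxE.
  under eq_bigr do rewrite !mxE G_eq mulr_sumr mulr_sumr.
  rewrite exchange_big /=; apply: eq_bigr => l _; rewrite !mxE ord1 mulr_suml.
  by apply: eq_bigr => x _; ring.
rewrite mulKmx // G_eq mxE; apply: eq_bigr => k _; by rewrite !mxE.
Qed.
End Model.

Lemma gsup_ge (R : realType) d (p G : state d -> R) z :
  norm2 (gvec p G z - muvec p G) <= gsup p G.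
Proof. by rewrite /gsup (bigD1 z) //= le_max lexx. Qed.

Lemma gsup_ge0 (R : realType) d (p G : state d -> R) : 0 <= gsup p G.
Proof.
rewrite /gsup; elim/big_ind: _ => // [a b a_ge0 _|z _]; first by rewrite le_max a_ge0.
exact: sqrtr_ge0.
Qed.

Section Estimator.
Variables (R : realType) (d : nat) (p G : state d -> R) (x : state d).

Definition influence (z : state d) : R :=
  ((invmx (Gamma p) *m (gvec p G z - muvec p G))^T *m evec p x) 0 0.

Lemma Ghat_sub_mean n (s : sample d n) : Gamma p \in unitmx -> (0 < n)%N ->
  Ghat p G s x - G x = n%:R^-1 * \sum_i influence (s i).
Proof.
move=> Gamma_unit n_gt0.
rewrite /Ghat /betahat /muhat scaler_sumr mxform_sumZ (G_expansion G Gamma_unit x).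
rewrite /influence; under [X in _ = _ * X]eq_bigr do rewrite mxformB.
rewrite sumrB sumr_const card_ord mulrBr -mulr_sumr -[X in _ - _ * X]mulr_natl mulKf //.
by rewrite pnatr_eq0 -lt0n.
Qed.

Lemma expect_influence : \sum_z p z = 1 -> \sum_z p z * influence z = 0.
Proof.
move=> p_sum1; rewrite /influence; under eq_bigr do rewrite mxformB mulrBr.
by rewrite sumrB -mulr_suml p_sum1 mul1r -mxform_sumZ subrr.
Qed.

Lemma norm2_invmx_le (lam : R) v : (forall b, eigenvalue (Gamma p) b -> lam <= b) ->
  0 < lam -> norm2 (invmx (Gamma p) *m v) <= norm2 v / lam.
Proof.
move=> lam_min lam_gt0; have Gamma_unit := unitmx_eigenvalue_gt0 lam_min lam_gt0.
have := sqr_norm_mulmx_ge (Gamma_sym p) (ltW lam_gt0) lam_min (invmx (Gamma p) *m v).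
rewrite mulKVmx // => spectral.
rewrite ler_pdivlMr // /norm2 -(ger0_norm (ltW lam_gt0)) -sqrtr_sqr -sqrtrM ?sumr_ge0 //.
  by rewrite mulrC ler_sqrt // sumr_ge0 // => k _; exact: sqr_ge0.
by move=> k _; exact: sqr_ge0.
Qed.

Lemma norm_influence_le (lam : R) z : (forall b, eigenvalue (Gamma p) b -> lam <= b) ->
  0 < lam -> `|influence z| <= gsup p G * norm2 (evec p x) / lam.
Proof.
move=> lam_min lam_gt0; rewrite /influence mxE.
under eq_bigr do rewrite mxE.
apply: (le_trans (CauchySchwarz_sum _ _)); rewrite mulrAC.
apply: ler_wpM2r; first exact: sqrtr_ge0.
apply: le_trans (norm2_invmx_le _ lam_min lam_gt0) _.
by rewrite ler_pM2r ?invr_gt0 ?gsup_ge.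
Qed.
End Estimator.

Unset Implicit Arguments.

Theorem theorem4 (R : realType) (d n : nat) (p : state d -> R) (G : state d -> R)
    (lam : R) (x : state d) (eps : R) :
  is_law p -> (0 < n)%N -> is_lambda_min (Gamma p) lam ->
  0 <= eps -> eps <= gsup p G * norm2 (evec p x) / lam ->
  Pn p (fun s : sample d n => eps < `|Ghat p G s x - G x|)
  <= expR (- (n%:R / 8) * (eps * lam / (gsup p G * norm2 (evec p x))) ^+ 2 + 4^-1).
Proof.
move=> [p_gt0 p_sum1] n_gt0 [_ lam_min] eps_ge0 eps_le.
set D := gsup p G * norm2 (evec p x) in eps_le *.
set E := fun s : sample d n => _.
have D_ge0 : 0 <= D by rewrite mulr_ge0 ?gsup_ge0 ?sqrtr_ge0.
rewrite (_ : - (n%:R / 8) * (eps * lam / D) ^+ 2 + 4^-1 =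
  - (n%:R * (eps * lam / D) ^+ 2) / 8 + 4^-1); last by ring.
rewrite -/(tail_bound _).
(* If [lam <= 0] or [D = 0] the rate [eps * lam / D] vanishes (as [D / 0 = 0]). *)
have degenerate : eps * lam / D = 0 ->
    Pn p E <= tail_bound (n%:R * (eps * lam / D) ^+ 2).
  move=> ->; rewrite expr0n mulr0.
  by apply: le_trans (prob_iid_le1 p_gt0 p_sum1 _) (tail_bound_ge1 _); rewrite ler0n.
have [lam_gt0|lam_le0] := ltrP 0 lam; last first.
  apply: degenerate; have [->|lam_neq0] := eqVneq lam 0; first by rewrite mulr0 mul0r.
  suff -> : eps = 0 by rewrite !mul0r.
  apply/eqP; rewrite eq_le eps_ge0 andbT; apply: le_trans eps_le _.
  by rewrite mulr_ge0_le0 // invr_le0.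
have [D0|D_neq0] := eqVneq D 0; first by apply: degenerate; rewrite D0 invr0 mulr0.
have Gamma_unit := unitmx_eigenvalue_gt0 lam_min lam_gt0.
rewrite (_ : eps * lam / D = eps / (D / lam)); last by field; rewrite gt_eqF.
rewrite /Pn (eq_bigl (fun s : sample d n =>
  eps < `|n%:R^-1 * \sum_i influence p G x (s i)|)); last by move=> s; rewrite /E Ghat_sub_mean.
apply: concentration_iid => //.
- exact: expect_influence.
- by move=> z; exact: norm_influence_le.
Qed.
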